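(* Given a field $F$ and a positive integer $n$, there is a finite group $H$ such that the group ring $F[H]$ has a subring isomorphic to the matrix algebra $M_n(F)$. *)

From mathcomp Require Import all_boot all_algebra all_fingroup.
Set Implicit Arguments. Unset Strict Implicit. Unset Printing Implicit Defensive.
Import GRing.Theory.
Local Open Scope ring_scope.

(* The group ring F[G] of a finite group G over a ring F: its elements are
   the formal sums sum_g a_g g, represented as finite functions G -> F
   (g |-> a_g). *)
Definition group_ring (F : nzRingType) (gT : finGroupType) := {ffun gT -> F}.

Definition gr_mul (F : nzRingType) (gT : finGroupType)
  (a b : {ffun gT -> F}) : {ffun gT -> F} :=
  [ffun x => \sum_(y : gT) a y * b ((y^-1 * x)%g)].

From HB Require Import structures.
From mathcomp Require Import all_boot all_algebra all_fingroup.
Set Implicit Arguments. Unset Strict Implicit. Unset Printing Implicit Defensive.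
Import GRing.Theory.
Local Open Scope ring_scope.

(* Let m > 1 be invertible in F and let G be the symmetric group on
   'I_n * 'Z_m.  The translations (a, x) |-> (a, x + v a) form an abelian
   subgroup T of order m^n, and T0, the translations with v 0 = 0, has
   index m.  Averaging over a subgroup of invertible order is
   multiplicative (avg X * avg Y = avg (X * Y)), so e = avg T0 - avg T is an
   idempotent.  Relabelling the coordinates by q normalises T, and when q
   moves 0 we have T0^q T0 = T, whence e q e = 0.  Taking for g_i the
   relabelling by the transposition (0 i), the elements g_i e g_j^-1 form a
   system of n x n matrix units in F[G], and A |-> sum A_ij g_i e g_j^-1
   embeds M_n(F). *)

Section MatrixUnits.
Variables (F : fieldType) (R : algType F) (n : nat) (E : 'I_n -> 'I_n -> R).
Hypothesis mul_units : forall i j k l, E i j * E k l = if j == k then E i l else 0.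

Definition mx_of_units (A : 'M[F]_n) : R := \sum_i \sum_j A i j *: E i j.

Lemma mx_of_unitsD A B : mx_of_units (A + B) = mx_of_units A + mx_of_units B.
Proof.
rewrite /mx_of_units -big_split; apply: eq_bigr => i _ /=.
by rewrite -big_split; apply: eq_bigr => j _; rewrite mxE scalerDl.
Qed.

Lemma mul_unit_mx_of_units i j B :
  E i j * mx_of_units B = \sum_l B j l *: E i l.
Proof.
rewrite mulr_sumr (bigD1 j) //= [X in _ + X]big1 ?addr0; last first.
  move=> k /negbTE nkj; rewrite mulr_sumr big1 // => l _.
  by rewrite -scalerAr mul_units eq_sym nkj scaler0.
by rewrite mulr_sumr; apply: eq_bigr => l _; rewrite -scalerAr mul_units eqxx.
Qed.

Lemma mx_of_unitsM A B : mx_of_units (A *m B) = mx_of_units A * mx_of_units B.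
Proof.
rewrite /mx_of_units mulr_suml; apply: eq_bigr => i _.
rewrite mulr_suml; under [RHS]eq_bigr do rewrite -scalerAl mul_unit_mx_of_units.
under [RHS]eq_bigr do rewrite scaler_sumr.
rewrite [RHS]exchange_big /=; apply: eq_bigr => l _.
by rewrite mxE scaler_suml; apply: eq_bigr => j _; rewrite scalerA.
Qed.

Lemma mx_of_units_coef i j A : E i i * mx_of_units A * E j j = A i j *: E i j.
Proof.
rewrite mul_unit_mx_of_units mulr_suml (bigD1 j) //= big1 ?addr0.
  by rewrite -scalerAl mul_units eqxx.
by move=> l /negbTE nlj; rewrite -scalerAl mul_units nlj scaler0.
Qed.

Lemma mx_of_units_inj i0 : E i0 i0 != 0 -> injective mx_of_units.
Proof.
move=> Ei0 A B eqAB; apply/matrixP => i j; apply/eqP; rewrite -subr_eq0.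
have Eij : E i j != 0.
  apply: contra_neq Ei0 => Eij0.
  have -> : E i0 i0 = E i0 i * E i j * E j i0.
    by rewrite mul_units eqxx mul_units eqxx.
  by rewrite Eij0 mulr0 mul0r.
have := congr1 (fun x => E i i * x * E j j) eqAB.
rewrite /= !mx_of_units_coef => /eqP; rewrite -subr_eq0 -scalerBl.
by rewrite scaler_eq0 (negbTE Eij) orbF.
Qed.

End MatrixUnits.

Section CornerUnits.
Variables (R : nzRingType) (n : nat) (e : R) (g h : 'I_n -> R).
Hypothesis e_sandwich : forall j k, e * (h j * g k) * e = if j == k then e else 0.

Definition corner_units i j := g i * e * h j.

Lemma corner_unitsM i j k l :
  corner_units i j * corner_units k l = if j == k then corner_units i l else 0.
Proof.
have -> : corner_units i j * corner_units k l = g i * (e * (h j * g k) * e) * h l.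
  by rewrite /corner_units !mulrA.
by rewrite e_sandwich; case: eqP; rewrite ?mulr0 ?mul0r // mulrA.
Qed.

End CornerUnits.

Section GroupRing.
Variables (F : nzRingType) (gT : finGroupType).
Local Notation FG := (group_ring F gT).

HB.instance Definition _ := GRing.Lmodule.copy FG {ffun gT -> F^o}.

Definition delta (g : gT) : FG := [ffun x => (x == g)%:R].

Lemma gr_mulA : associative (@gr_mul F gT).
Proof.
move=> a b c; apply/ffunP=> x; rewrite !ffunE.
under [RHS]eq_bigr => z _ do rewrite ffunE big_distrl /=.
rewrite [RHS]exchange_big /=; apply: eq_bigr => y _.
rewrite ffunE big_distrr /= [RHS](reindex_inj (mulgI y)) /=; apply: eq_bigr => z _.
by rewrite mulrA mulKg invMg mulgA.
Qed.

Lemma gr_mul_deltal g a x : gr_mul (delta g) a x = a (g^-1 * x)%g.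
Proof.
rewrite ffunE (bigD1 g) //= big1 ?addr0; first by rewrite ffunE eqxx mul1r.
by move=> y /negbTE ny; rewrite ffunE ny mul0r.
Qed.

Lemma gr_mul_deltar g a x : gr_mul a (delta g) x = a (x * g^-1)%g.
Proof.
rewrite ffunE (bigD1 (x * g^-1)%g) //= big1 ?addr0.
  by rewrite ffunE invMg invgK mulgKV eqxx mulr1.
move=> y ny; rewrite ffunE.
suff /negbTE -> : (y^-1 * x != g)%g by rewrite mulr0.
by apply: contra ny => /eqP <-; rewrite invMg invgK mulKVg.
Qed.

Lemma gr_mul1l : left_id (delta 1) (@gr_mul F gT).
Proof. by move=> a; apply/ffunP=> x; rewrite gr_mul_deltal invg1 mul1g. Qed.

Lemma gr_mul1r : right_id (delta 1) (@gr_mul F gT).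
Proof. by move=> a; apply/ffunP=> x; rewrite gr_mul_deltar invg1 mulg1. Qed.

Lemma gr_mulDl : left_distributive (@gr_mul F gT) +%R.
Proof.
move=> a b c; apply/ffunP=> x; rewrite !ffunE -big_split /=.
by apply: eq_bigr => y _; rewrite ffunE mulrDl.
Qed.

Lemma gr_mulDr : right_distributive (@gr_mul F gT) +%R.
Proof.
move=> a b c; apply/ffunP=> x; rewrite !ffunE -big_split /=.
by apply: eq_bigr => y _; rewrite ffunE mulrDr.
Qed.

Lemma delta1_neq0 : delta 1 != 0.
Proof. by apply/eqP => /ffunP /(_ 1%g); rewrite !ffunE eqxx; apply/eqP; exact: oner_neq0. Qed.

HB.instance Definition _ := GRing.Zmodule_isNzRing.Build FG
  gr_mulA gr_mul1l gr_mul1r gr_mulDl gr_mulDr delta1_neq0.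

Lemma gr_scalerAl (a : F) (u v : FG) : a *: (u * v) = (a *: u) * v.
Proof.
apply/ffunP=> x; rewrite !ffunE scaler_sumr.
by apply: eq_bigr => y _; rewrite ffunE; exact: mulrA.
Qed.

HB.instance Definition _ := GRing.Lmodule_isLalgebra.Build F FG gr_scalerAl.

Lemma delta1E : delta 1 = 1. Proof. by []. Qed.

Lemma deltaM g h : delta g * delta h = delta (g * h).
Proof.
apply/ffunP=> x; rewrite gr_mul_deltal !ffunE; congr (_%:R).
by rewrite -(inj_eq (mulgI g)) mulKVg.
Qed.

End GroupRing.

Arguments delta {F gT} g.

Section ComGroupRing.
Variables (F : comNzRingType) (gT : finGroupType).

Lemma gr_scalerAr (a : F) (u v : group_ring F gT) : a *: (u * v) = u * (a *: v).
Proof.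
apply/ffunP=> x; rewrite !ffunE scaler_sumr.
by apply: eq_bigr => y _; rewrite ffunE; exact: mulrCA.
Qed.

HB.instance Definition _ := GRing.Lalgebra_isAlgebra.Build F (group_ring F gT) gr_scalerAr.

End ComGroupRing.

Section Averages.
Variables (F : fieldType) (gT : finGroupType).
Local Notation FG := (group_ring F gT).

Definition avg (X : {set gT}) : FG :=
  [ffun x => if x \in X then (#|X|%:R)^-1 else 0].

Lemma avgM (X Y : {group gT}) :
  (#|X|%:R : F) != 0 -> (#|Y|%:R : F) != 0 -> avg X * avg Y = avg (X * Y)%g.
Proof.
move=> natX natY; apply/ffunP=> z; rewrite /= !ffunE.
case: (boolP (z \in X * Y)%g) => XYz; last first.
  rewrite big1 // => y _; rewrite !ffunE.
  case: ifP => Xy; last by rewrite mul0r.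
  case: ifP => Yy; last by rewrite mulr0.
  by case/negP: XYz; rewrite -(mulKVg y z) mem_mulg.
case/mulsgP: XYz => x y Xx Yy ->.
(* z = x y has exactly #|X :&: Y| factorizations, and mul_cardG counts them. *)
rewrite (reindex_inj (mulgI x)) /=.
rewrite (eq_bigr (fun w => if w \in X :&: Y then (#|X|%:R)^-1 * (#|Y|%:R)^-1 else 0));
  last first.
  move=> w _; rewrite !ffunE groupMl // invMg -mulgA mulKg inE groupMr // groupV.
  by case: (w \in X); case: (w \in Y); rewrite ?mulr0 ?mul0r.
rewrite -big_mkcond /= sumr_const -[_ *+ _]mulr_natr -invfM.
have cardXY : (#|X|%:R * #|Y|%:R : F) = #|(X * Y)%g|%:R * #|X :&: Y|%:R.
  by rewrite -!natrM mul_cardG.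
have natXY : (#|X :&: Y|%:R : F) != 0.
  by apply: contraNneq (mulf_neq0 natX natY) => XY0; rewrite cardXY XY0 mulr0.
by rewrite cardXY invfM -mulrA mulVf ?mulr1.
Qed.

Lemma avgJ (X : {set gT}) g : delta g^-1 * avg X * delta g = avg (X :^ g)%g.
Proof.
apply/ffunP=> z; rewrite gr_mul_deltar gr_mul_deltal !ffunE cardJg mem_conjg.
by rewrite /conjg invgK !mulgA.
Qed.

Lemma natr_card_sub_neq0 (G H : {group gT}) :
  (#|G|%:R : F) != 0 -> H \subset G -> (#|H|%:R : F) != 0.
Proof.
move=> natG /cardSg /dvdnP [k cardG].
by apply: contraNneq natG; rewrite cardG natrM => ->; rewrite mulr0.
Qed.

End Averages.

Arguments avg {F gT} X.

Section AverageIdempotent.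
Variables (F : fieldType) (gT : finGroupType) (G P : {group gT}).
Hypotheses (sPG : P \subset G) (natG : (#|G|%:R : F) != 0).

Definition avg_idem : group_ring F gT := avg P - avg G.

Lemma avg_idem_conj h : (G :^ h)%g = G ->
  avg_idem * delta h * avg_idem = delta h * (avg (P :^ h * P)%g - avg G).
Proof.
move=> nGh; have sPhG : (P :^ h)%g \subset G by rewrite -nGh conjSg.
have nat_sub H := @natr_card_sub_neq0 F gT G H natG.
have -> : avg_idem * delta h * avg_idem =
    delta h * (delta h^-1 * avg_idem * delta h) * avg_idem.
  by rewrite !mulrA deltaM mulgV delta1E mul1r.
have -> : delta h^-1 * avg_idem * delta h = avg (P :^ h)%g - avg G.
  by rewrite /avg_idem mulrBr mulrBl !avgJ nGh.
rewrite -mulrA; congr (_ * _); rewrite /avg_idem !mulrBl !mulrBr.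
rewrite (avgM (X := (P :^ h)%G) (Y := P)) ?(avgM (X := (P :^ h)%G) (Y := G))
        ?(avgM (X := G) (Y := P)) ?(avgM (X := G) (Y := G)) ?nat_sub //=.
by rewrite (mulSGid sPhG) (mulGSid sPG) mulGid subrr subr0.
Qed.

Lemma avg_idemM : avg_idem * avg_idem = avg_idem.
Proof.
by have := avg_idem_conj (conjsg1 G); rewrite delta1E mulr1 mul1r conjsg1 mulGid.
Qed.

Lemma avg_idem_conj_eq0 h : (G :^ h)%g = G -> (P :^ h * P)%g = G ->
  avg_idem * delta h * avg_idem = 0.
Proof. by move=> nGh PhP; rewrite avg_idem_conj // PhP subrr mulr0. Qed.

Lemma avg_idem_neq0 : P \proper G -> avg_idem != 0.
Proof.
case/properP=> _ [x Gx notPx]; apply/eqP => /ffunP /(_ x).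
rewrite !ffunE (negbTE notPx) Gx sub0r => /eqP.
by rewrite oppr_eq0 invr_eq0 (negbTE natG).
Qed.

End AverageIdempotent.

Arguments avg_idem {F gT} G P.

Section TranslationsAndRelabelings.
Variables (n m : nat).
Local Notation T := ('I_n.+1 * 'Z_m)%type.
Local Notation V := {ffun 'I_n.+1 -> 'Z_m}.

Definition transl_fun (v : V) (x : T) : T := (x.1, x.2 + v x.1).

Lemma transl_fun_inj v : injective (transl_fun v).
Proof.
move=> [a b] [c d] eq_fun; have /= ac := congr1 fst eq_fun.
by have /= := congr1 snd eq_fun; rewrite ac => /addIr ->.
Qed.

Definition transl v : {perm T} := perm (@transl_fun_inj v).

Lemma translE v x : transl v x = (x.1, x.2 + v x.1).
Proof. by rewrite permE. Qed.

Lemma translD v w : (transl v * transl w)%g = transl (v + w).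
Proof. by apply/permP=> x; rewrite permM !translE /= ffunE addrA. Qed.

Lemma transl0 : transl 0 = 1%g.
Proof. by apply/permP=> -[a b]; rewrite translE perm1 ffunE addr0. Qed.

Lemma transl_inj : injective transl.
Proof.
move=> v w eq_vw; apply/ffunP=> a.
by have := congr1 (fun s : {perm T} => s (a, 0)) eq_vw; rewrite /= !translE !add0r => -[].
Qed.

Definition relabel_fun (q : {perm 'I_n.+1}) (x : T) : T := (q x.1, x.2).

Lemma relabel_fun_inj q : injective (relabel_fun q).
Proof. by move=> [a b] [c d] [/perm_inj -> ->]. Qed.

Definition relabel q : {perm T} := perm (@relabel_fun_inj q).

Lemma relabelE q x : relabel q x = (q x.1, x.2).
Proof. by rewrite permE. Qed.

Lemma relabelM q r : relabel (q * r)%g = (relabel q * relabel r)%g.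
Proof. by apply/permP=> x; rewrite permM !relabelE permM. Qed.

Lemma relabel1 : relabel 1%g = 1%g.
Proof. by apply/permP=> -[a b]; rewrite relabelE !perm1. Qed.

Lemma relabelV q : relabel q^-1%g = (relabel q)^-1%g.
Proof. by apply/eqP; rewrite eq_sym eq_invg_mul -relabelM mulgV relabel1. Qed.

Lemma translJ v q : (transl v ^ relabel q)%g = transl [ffun a => v (q^-1%g a)].
Proof.
apply/permP=> -[a b]; rewrite /conjg !permM -relabelV !translE !relabelE /=.
by rewrite ffunE permKV.
Qed.

Definition Transl : {set {perm T}} := [set transl v | v : V].
Definition Transl0 : {set {perm T}} :=
  [set transl v | v in [set v : V | v ord0 == 0]].

Lemma Transl_group_set : group_set Transl.
Proof.
apply/group_setP; split; first by apply/imsetP; exists 0; rewrite ?transl0.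
by move=> _ _ /imsetP [v _ ->] /imsetP [w _ ->]; rewrite translD imset_f.
Qed.
Canonical Transl_group := Group Transl_group_set.

Lemma Transl0_group_set : group_set Transl0.
Proof.
apply/group_setP; split; first by apply/imsetP; exists 0; rewrite ?transl0 // inE ffunE.
move=> _ _ /imsetP [v v0 ->] /imsetP [w w0 ->]; rewrite translD imset_f //.
by move: v0 w0; rewrite !inE ffunE => /eqP -> /eqP ->; rewrite addr0.
Qed.
Canonical Transl0_group := Group Transl0_group_set.

Lemma Transl0_proper : Transl0 \proper Transl.
Proof.
apply/properP; split.
  by apply/subsetP=> _ /imsetP [v _ ->]; rewrite imset_f.
exists (transl [ffun a => (a == ord0)%:R]); first by rewrite imset_f.
apply/imsetP=> -[v]; rewrite inE => /eqP v0 /transl_inj /ffunP /(_ ord0).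
by rewrite ffunE eqxx v0 => /eqP; rewrite oner_eq0.
Qed.

Lemma card_Transl : (1 < m)%N -> #|Transl| = (m ^ n.+1)%N.
Proof.
by move=> m_gt1; rewrite card_imset ?card_ffun ?card_ord ?Zp_cast //; exact: transl_inj.
Qed.

Lemma Transl_relabel q : (Transl :^ relabel q)%g = Transl.
Proof.
apply/eqP; rewrite eq_sym eqEcard cardJg leqnn andbT.
apply/subsetP=> _ /imsetP [v _ ->].
by rewrite -(conjgKV (relabel q) (transl v)) memJ_conjg -relabelV translJ imset_f.
Qed.

Lemma Transl0_relabel_mul (q : {perm 'I_n.+1}) : q ord0 != ord0 ->
  ((Transl0 :^ relabel q) * Transl0)%g = Transl.
Proof.
move=> q0; have sT0T := proper_sub Transl0_proper.
apply/eqP; rewrite eqEsubset; apply/andP; split.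
  by apply: mul_subG => //=; rewrite -(Transl_relabel q) conjSg.
apply/subsetP=> _ /imsetP [u _ ->].
pose w : V := [ffun a => if a == q ord0 then 0 else u a].
rewrite -(subrK w u) addrC -translD mem_mulg //.
  have -> : transl w = (transl [ffun a => w (q a)] ^ relabel q)%g.
    by rewrite translJ; congr transl; apply/ffunP=> a; rewrite !ffunE permKV.
  by rewrite memJ_conjg imset_f // inE !ffunE eqxx.
by rewrite imset_f // inE !ffunE [ord0 == _]eq_sym (negbTE q0) subrr.
Qed.

Definition unit_perm (i : 'I_n.+1) := relabel (tperm ord0 i).

End TranslationsAndRelabelings.

Section TranslationIdempotent.
Variables (F : fieldType) (n m : nat).
Hypotheses (m_gt1 : (1 < m)%N) (natm : (m%:R : F) != 0).
Local Notation e := (avg_idem (F := F) (Transl_group n m) (Transl0_group n m)).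

Lemma natr_card_Transl : (#|Transl n m|%:R : F) != 0.
Proof. by rewrite card_Transl // natrX expf_neq0. Qed.

Lemma avg_idem_unit_perm j k :
  e * (delta (unit_perm m j)^-1 * delta (unit_perm m k)) * e = if j == k then e else 0.
Proof.
have sT0T := proper_sub (Transl0_proper n m).
rewrite deltaM; case: eqP => [<-|/eqP njk].
  by rewrite mulVg delta1E mulr1 avg_idemM // natr_card_Transl.
rewrite -relabelV -relabelM avg_idem_conj_eq0 ?natr_card_Transl ?Transl_relabel //.
rewrite Transl0_relabel_mul // permM tpermV tpermL; apply: contra njk => /eqP jk0.
by apply/eqP/(@perm_inj _ (tperm ord0 k)); rewrite jk0 tpermR.
Qed.

End TranslationIdempotent.

Theorem lemma3p1 (F : fieldType) (n : nat) (hn : (0 < n)%N) :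
  exists (gT : finGroupType) (phi : 'M[F]_n -> {ffun gT -> F}),
    [/\ injective phi,
        forall A B : 'M[F]_n, phi (A + B) = phi A + phi B &
        forall A B : 'M[F]_n, phi (A *m B) = gr_mul (phi A) (phi B)].
Proof.
case: n hn => // n _.
pose m := if (2%:R : F) == 0 then 3%N else 2%N.
have m_gt1 : (1 < m)%N by rewrite /m; case: ifP.
have natm : (m%:R : F) != 0.
  rewrite /m; case: ifP => [/eqP char2 | /negbT //].
  by rewrite -addn1 natrD char2 add0r oner_eq0.
pose e := avg_idem (F := F) (Transl_group n m) (Transl0_group n m).
pose E := corner_units e (fun i => delta (unit_perm m i))
                         (fun j => delta (unit_perm m j)^-1).
have mulE := corner_unitsM (avg_idem_unit_perm (n := n) m_gt1 natm).
have E00 : E ord0 ord0 = e.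
  by rewrite /E /corner_units /unit_perm tperm1 relabel1 invg1 delta1E mulr1 mul1r.
exists ({perm 'I_n.+1 * 'Z_m} : finGroupType), (mx_of_units E); split.
- apply: (mx_of_units_inj mulE (i0 := ord0)); move: E00; rewrite /E => ->.
  exact: avg_idem_neq0 (natr_card_Transl n m_gt1 natm) (Transl0_proper n m).
- exact: (mx_of_unitsD E).
- exact: mx_of_unitsM mulE.
Qed.
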